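(* For any L-primitive set $A\subset\mathbb{Z}_{>1}$, the lower natural density satisfies $\underline{\mathrm{d}}(\mathrm{L}_A)\ge\sum_{a\in A}\mathrm{d}(\mathrm{L}_a)$. Moreover, if $\sum_{a\in A}1/a<\infty$, then the natural density $\mathrm{d}(\mathrm{L}_A)$ exists and equals $\sum_{a\in A}\mathrm{d}(\mathrm{L}_a)$.
   Context: For an integer $a>1$ with largest prime factor $P(a)$, $\mathrm{L}_a=\{ba: b\in\mathbb{N},\ \text{every prime } p\mid b \text{ satisfies } p\ge P(a)\}$, which has natural density $\mathrm{d}(\mathrm{L}_a)=\frac1a\prod_{p<P(a)}(1-\frac1p)$; $\mathrm{L}_A=\bigcup_{a\in A}\mathrm{L}_a$. $\underline{\mathrm{d}}(S)=\liminf_{x\to\infty}|S\cap[1,x]|/x$. A set $A\subset\mathbb{Z}_{>1}$ is L-primitive if $a'\notin\mathrm{L}_a$ for all distinct $a,a'\in A$. *)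

From HB Require Import structures.
From mathcomp Require Import all_boot all_order all_algebra.
From mathcomp Require Import all_classical all_reals all_analysis.
Set Implicit Arguments. Unset Strict Implicit. Unset Printing Implicit Defensive.
Import Order.TTheory GRing.Theory Num.Theory.
Local Open Scope classical_set_scope.
Local Open Scope ring_scope.

Definition P (a : nat) : nat := max_pdiv a.

Definition L (a : nat) : set nat :=
  [set n | exists b : nat, (0 < b)%N /\ n = (b * a)%N /\
           (forall p : nat, prime p -> (p %| b)%N -> (P a <= p)%N)].

Definition LA (A : set nat) : set nat := \bigcup_(a in A) L a.

Definition dL (R : realType) (a : nat) : R :=
  (a%:R)^-1 * \prod_(p < P a | prime p) (1 - (p%:R)^-1).

Definition Lprimitive (A : set nat) : Prop :=
  forall a a', A a -> A a' -> a <> a' -> ~ L a a'.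

Definition count_ratio (R : realType) (S : set nat) (N : nat) : R :=
  (\sum_(1 <= n < N.+1) ((n \in S) : nat)%:R) / N%:R.

From mathcomp Require Import all_boot all_order all_algebra.
From mathcomp Require Import all_classical all_reals all_analysis.
From mathcomp Require Import zify ring lra.
Set Implicit Arguments.
Unset Strict Implicit.
Unset Printing Implicit Defensive.
Import Order.TTheory GRing.Theory Num.Theory numFieldNormedType.Exports.
Local Open Scope classical_set_scope.

(* Let M_a be the product of the primes below P(a).  An integer n lies in L_a
   exactly when a | n and n/a is coprime to M_a; as coprimality to M_a has
   period M_a with phi(M_a) residues per period, L_a has
   N phi(M_a) / (a M_a) + O(phi(M_a)) elements up to N, and
   phi(M_a) / M_a = prod_{p < P(a)} (1 - 1/p).
   If n lies in both L_a and L_a', the one of a, a' with the lexicographically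
   smaller pair (P(a), v_P(a)(a)) divides the other with a cofactor whose
   primes are at least its largest prime factor, so one lies in the L-set of
   the other.  Hence for L-primitive A the L_a are pairwise disjoint, and
   counting through the a < K of A bounds the liminf below by the K-th
   partial sum.  Conversely the elements of L_A up to N coming from a >= K
   number at most sum_{K <= a <= N} N/a, so when sum 1/a converges the
   density is squeezed between partial sums and partial sums plus a
   vanishing tail. *)

Section Primorial.
Local Open Scope nat_scope.

(* Primes strictly below [n], i.e. the usual primorial of [n - 1]. *)
Definition primorial (n : nat) : nat := \prod_(p < n | prime p) p.

Lemma primorial_gt0 n : 0 < primorial n.
Proof. by rewrite prodn_cond_gt0 // => p /prime_gt0. Qed.

Lemma coprime_primorialP n b :
  reflect (forall p, prime p -> p %| b -> n <= p) (coprime b (primorial n)).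
Proof.
apply: (iffP idP) => [cop p p_pr p_b | ge_n].
  rewrite leqNgt; apply/negP => lt_pn.
  have p_prim : p %| primorial n by rewrite /primorial (bigD1 (Ordinal lt_pn)) ?dvdn_mulr.
  by have := coprime_dvdl p_b cop; rewrite prime_coprime // p_prim.
rewrite coprime_sym; apply: (big_ind (fun x => coprime x b)) => [||[p /= lt_pn] p_pr].
- exact: coprime1n.
- by move=> x y; rewrite coprimeMl => -> ->.
- by rewrite prime_coprime //; apply/negP => /(ge_n _ p_pr); rewrite leqNgt lt_pn.
Qed.

Lemma LP a n : 0 < a -> 0 < n ->
  reflect (L a n) ((a %| n) && coprime (n %/ a) (primorial (P a))).
Proof.
move=> a_gt0 n_gt0; apply: (iffP andP) => [[a_n cop] | [b [b_gt0 [-> Hb]]]].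
  exists (n %/ a); split; last split; last exact/coprime_primorialP.
    by rewrite divn_gt0 // dvdn_leq.
  by rewrite divnK.
by rewrite dvdn_mull // mulnK //; split => //; apply/coprime_primorialP.
Qed.

Lemma L_dvdn a n : L a n -> a %| n.
Proof. by case=> b [_ [-> _]]; rewrite dvdn_mull. Qed.

End Primorial.

Section Disjoint.
Local Open Scope nat_scope.

Lemma logn_gt_max_pdiv a p : P a < p -> logn p a = 0.
Proof.
move=> lt_Pp; apply/eqP; rewrite -leqn0 leqNgt logn_gt0.
by apply/negP => /max_pdiv_max; rewrite /P leqNgt lt_Pp.
Qed.

Lemma logn_L a n p : L a n -> prime p -> p < P a -> logn p n = logn p a.
Proof.
case=> b [_ [-> Hb]] p_pr lt_pP; apply: logn_Gauss.
by rewrite prime_coprime //; apply/negP => /(Hb _ p_pr); rewrite leqNgt lt_pP.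
Qed.

Lemma L_of_common_multiple a a' n : 0 < a -> 0 < a' -> L a n -> L a' n ->
  P a <= P a' -> logn (P a) a <= logn (P a) a' -> L a a'.
Proof.
move=> a_gt0 a'_gt0 Lan La'n le_PP le_log.
have same_log p : prime p -> p < P a -> logn p a' = logn p a.
  by move=> p_pr lt_pP; rewrite -(logn_L Lan) // (logn_L La'n) //; lia.
have a_a' : a %| a'.
  apply/dvdn_partP => // p; rewrite mem_primes => /andP[p_pr _].
  rewrite p_part pfactor_dvdn //.
  case: (ltngtP p (P a)) => [lt_pP | lt_Pp | ->]; last exact: le_log.
    by rewrite same_log.
  by rewrite logn_gt_max_pdiv.
have c_gt0 : 0 < a' %/ a by rewrite divn_gt0 // dvdn_leq.
exists (a' %/ a); split => //; split => [|p p_pr p_c]; first by rewrite divnK.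
rewrite leqNgt; apply/negP => lt_pP.
have : 0 < logn p (a' %/ a) by rewrite logn_gt0 mem_primes p_pr c_gt0.
by rewrite logn_div // same_log // subnn.
Qed.

Lemma L_total a a' n : 1 < a -> 1 < a' -> L a n -> L a' n -> L a a' \/ L a' a.
Proof.
wlog le_PP : a a' / P a <= P a' => [hwlog|] a_gt1 a'_gt1 Lan La'n.
  case: (leqP (P a) (P a')) => [le | /ltnW le]; first exact: hwlog.
  by rewrite or_comm; apply: hwlog.
have n_gt0 : 0 < n by case: Lan => b [b_gt0 [-> _]]; rewrite muln_gt0 b_gt0; lia.
have [a_gt0 a'_gt0] : 0 < a /\ 0 < a' by lia.
case: (ltngtP (P a) (P a')) le_PP => // [lt_PP | eq_PP] _.
  left; apply: (L_of_common_multiple a_gt0 a'_gt0 Lan La'n); first exact: ltnW.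
  rewrite -(logn_L La'n) ?max_pdiv_prime //.
  exact: dvdn_leq_log (L_dvdn Lan).
case: (leqP (logn (P a) a) (logn (P a) a')) => le_log.
  by left; apply: (L_of_common_multiple a_gt0 a'_gt0 Lan La'n _ le_log); rewrite eq_PP.
right; apply: (L_of_common_multiple a'_gt0 a_gt0 La'n Lan); rewrite -eq_PP //.
exact: ltnW.
Qed.

Lemma Lprimitive_trivIset A : (forall a, A a -> 1 < a) -> Lprimitive A -> trivIset A L.
Proof.
move=> A_gt1 primA a a' Aa Aa' [n [Lan La'n]].
have [//|/eqP neq] := eqVneq a a'.
exfalso; have [] := L_total (A_gt1 _ Aa) (A_gt1 _ Aa') Lan La'n.
  exact: (primA a a' Aa Aa' neq).
exact: (primA a' a Aa' Aa (nesym neq)).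
Qed.

End Disjoint.

Section Counting.
Local Open Scope nat_scope.

Definition count_upto (S : set nat) (N : nat) : nat := \sum_(1 <= n < N.+1) (n \in S : nat).

Definition coprime_count (K M : nat) : nat := \sum_(1 <= b < K.+1) (coprime b M : nat).

Lemma sum_multiples (F : nat -> nat) a N : 0 < a ->
  \sum_(1 <= n < N.+1) (if a %| n then F (n %/ a) else 0) = \sum_(1 <= b < (N %/ a).+1) F b.
Proof.
move=> a_gt0; elim: N => [|N IHN]; first by rewrite div0n !big_geq.
rewrite big_nat_recr //= IHN (divnS _ a_gt0).
case: ifP => a_N /=; rewrite ?a_N; last by rewrite add0n addn0.
by rewrite add1n [RHS]big_nat_recr.
Qed.

Lemma count_upto_L a N : 0 < a ->
  count_upto (L a) N = coprime_count (N %/ a) (primorial (P a)).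
Proof.
move=> a_gt0; rewrite /coprime_count -sum_multiples //.
apply: eq_big_nat => n /andP[n_gt0 _].
have -> : (n \in L a) = (a %| n) && coprime (n %/ a) (primorial (P a)).
  by apply/idP/idP => [/set_mem/(LP a_gt0 n_gt0) | /(LP a_gt0 n_gt0)/mem_set].
by case: (a %| n).
Qed.

Lemma coprime_count_totient M : coprime_count M M = totient M.
Proof.
rewrite totient_count_coprime /coprime_count big_add1 /=.
(* Adding [coprime 0 M = coprime M M] turns either side into the sum over [0, M]. *)
apply: (@addnI (coprime 0 M)).
rewrite -(big_nat_recl _ _ (fun b => (coprime b M : nat))) // big_nat_recr //= addnC.
congr (_ + _); last by apply: eq_bigr => d _; rewrite coprime_sym.
by rewrite /coprime gcd0n gcdnn.
Qed.

Lemma coprime_count_mul j M : coprime_count (j * M) M = j * totient M.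
Proof.
elim: j => [|j IHj]; first by rewrite /coprime_count big_geq.
rewrite mulSn /coprime_count (big_cat_nat (n := (j * M).+1)) //=; last by rewrite ltnS leq_addl.
rewrite -/(coprime_count _ _) IHj -[(j * M).+1]add1n big_addn -addSn addnK addnC mulSn.
congr (_ + _); rewrite -coprime_count_totient; apply: eq_big_nat => b _.
by rewrite -coprime_modl addnC modnMDl coprime_modl.
Qed.

Lemma coprime_count_bounds K M : 0 < M ->
  K %/ M * totient M <= coprime_count K M <= (K %/ M).+1 * totient M.
Proof.
move=> M_gt0; have mono K1 K2 : K1 <= K2 -> coprime_count K1 M <= coprime_count K2 M.
  by move=> le; rewrite /coprime_count [X in _ <= X](big_cat_nat (n := K1.+1)) ?leq_addr.
by rewrite -!coprime_count_mul !mono // ?leq_divM // ltnW // ltn_ceil.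
Qed.

Lemma count_upto_L_estimate a N : 0 < a ->
  count_upto (L a) N * (a * primorial (P a))
    <= N * totient (primorial (P a)) + a * primorial (P a) * totient (primorial (P a)) /\
  N * totient (primorial (P a))
    <= count_upto (L a) N * (a * primorial (P a)) + a * primorial (P a) * totient (primorial (P a)).
Proof.
move=> a_gt0; have M_gt0 := primorial_gt0 (P a).
have D_gt0 : 0 < a * primorial (P a) by rewrite muln_gt0 a_gt0.
have := coprime_count_bounds (N %/ a) M_gt0; rewrite -divnMA -count_upto_L //.
have := leq_divM N (a * primorial (P a)); have := ltn_ceil N D_gt0.
set q := N %/ _; set c := count_upto _ _; set D := a * _; set f := totient _.
nia.
Qed.

Lemma sum_mem_le_bigcup (I : eqType) (r : seq I) (A : set I) (F : I -> set nat) n :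
  uniq r -> trivIset A F ->
  \sum_(i <- r | i \in A) (n \in F i : nat) <= (n \in \bigcup_(i in A) F i : nat).
Proof.
move=> r_uniq F_triv; case: (boolP (n \in _)) => [/set_mem [i0 Ai0 F_i0n] | n_notin].
  apply: (@leq_trans (\sum_(i <- r | i == i0) 1)).
    rewrite big_mkcond [X in _ <= X]big_mkcond /=; apply: leq_sum => i _.
    case: ifP => // /set_mem Ai; case: (boolP (n \in F i)) => // /set_mem F_in.
    by rewrite (F_triv _ _ Ai Ai0) ?eqxx //; exists n.
  by rewrite sum1_count count_uniq_mem // leq_b1.
rewrite big1 // => i /set_mem Ai; case: (boolP (n \in F i)) => // /set_mem F_in.
by case/negP: n_notin; apply/mem_set; exists i.
Qed.

Lemma count_upto_bigcup_ge (A : set nat) (F : nat -> set nat) K N : trivIset A F ->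
  \sum_(0 <= a < K | a \in A) count_upto (F a) N <= count_upto (\bigcup_(a in A) F a) N.
Proof.
move=> F_triv; rewrite /count_upto exchange_big_nat /=; apply: leq_sum => n _.
exact: sum_mem_le_bigcup (iota_uniq _ _) F_triv.
Qed.

Lemma count_upto_bigcup_le (A : set nat) (F : nat -> set nat) K N :
  (forall a, A a -> F a `<=` [set n | a %| n]) ->
  count_upto (\bigcup_(a in A) F a) N
    <= \sum_(0 <= a < K | a \in A) count_upto (F a) N + \sum_(K <= a < N.+1 | a \in A) N %/ a.
Proof.
move=> F_dvd; under [X in _ <= _ + X]eq_bigr => a _ do rewrite divn_count_dvd.
rewrite /count_upto exchange_big_nat [X in _ <= _ + X]exchange_big_nat -big_split /=.
rewrite big_nat_cond [X in _ <= X]big_nat_cond; apply: leq_sum => n /andP[/andP[n_gt0 n_le] _].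
case: (boolP (n \in _)) => // /set_mem [a0 Aa0 F_a0n].
have a0_n : a0 %| n := F_dvd _ Aa0 _ F_a0n.
have a0_in : a0 \in A by apply/mem_set.
case: (ltnP a0 K) => [lt_a0K | le_Ka0].
  apply: leq_trans (leq_addr _ _).
  rewrite big_mkcond (bigD1_seq a0) ?mem_index_iota ?iota_uniq //=.
  by rewrite a0_in (mem_set F_a0n) leq_addr.
apply: leq_trans (leq_addl _ _).
rewrite big_mkcond (bigD1_seq a0) ?mem_index_iota ?iota_uniq //=.
  by rewrite a0_in a0_n leq_addr.
by rewrite le_Ka0 (leq_ltn_trans (dvdn_leq n_gt0 a0_n) n_le).
Qed.

End Counting.

Section Densities.
Variable R : realType.
Local Open Scope ring_scope.

Lemma count_ratioE S N : count_ratio R S N = (count_upto S N)%:R / N%:R.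
Proof. by rewrite /count_ratio /count_upto natr_sum. Qed.

Lemma totient_primorial n :
  (totient (primorial n))%:R / (primorial n)%:R = \prod_(p < n | prime p) (1 - p%:R^-1) :> R.
Proof.
elim: n => [|n IHn]; first by rewrite /primorial !big_ord0 divr1.
rewrite /primorial [in RHS]big_mkcond big_ord_recr /= -big_mkcond.
rewrite [in LHS]big_mkcond [in LHS]big_ord_recr /= -[in LHS]big_mkcond.
rewrite -/(primorial n) -IHn; case: ifP => [n_pr | _]; last by rewrite !muln1 mulr1.
have cop : coprime (primorial n) n.
  by rewrite coprime_sym; apply/coprime_primorialP => p p_pr; rewrite dvdn_prime2 // => /eqP ->.
rewrite totient_coprime // (totient_prime n_pr) -subn1 !natrM natrB ?prime_gt0 //.
have M_neq0 : (primorial n)%:R != 0 :> R by rewrite pnatr_eq0 -lt0n primorial_gt0.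
have n_neq0 : n%:R != 0 :> R by rewrite pnatr_eq0 -lt0n prime_gt0.
by field; rewrite M_neq0 n_neq0.
Qed.

Lemma dLE a : (0 < a)%N ->
  dL R a = (totient (primorial (P a)))%:R / (a * primorial (P a))%:R.
Proof.
move=> a_gt0; rewrite /dL -totient_primorial natrM invfM.
by rewrite mulrCA mulrA.
Qed.

Lemma dL_ge0 a : 0 <= dL R a.
Proof. by rewrite /dL -totient_primorial !mulr_ge0 ?invr_ge0. Qed.

Lemma dL_le_inv a : dL R a <= a%:R^-1.
Proof.
rewrite /dL ler_piMr ?invr_ge0 // prodr_ile1 // => -[p _] /= /prime_gt0 p_gt0.
by rewrite subr_ge0 invf_le1 ?ltr0n // ler1n p_gt0 gerBl invr_ge0 ler0n.
Qed.

Lemma dist_count_ratio_L a N : (0 < a)%N -> (0 < N)%N ->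
  `|count_ratio R (L a) N - dL R a| <= (totient (primorial (P a)))%:R / N%:R.
Proof.
move=> a_gt0 N_gt0; rewrite count_ratioE dLE //.
have [hi lo] := count_upto_L_estimate N a_gt0.
have D_gt0 : (0 < a * primorial (P a))%N by rewrite muln_gt0 a_gt0 primorial_gt0.
move: hi lo D_gt0; set c := count_upto _ _; set D := (a * _)%N; set f := totient _.
clearbody c D f; move=> hi lo D_gt0; rewrite -!(ler_nat R) !natrD !natrM in hi lo.
have [N_pos D_pos] : 0 < N%:R :> R /\ 0 < D%:R :> R by split; rewrite ltr0n.
have -> : c%:R / N%:R - f%:R / D%:R = (c%:R * D%:R - N%:R * f%:R) / (N%:R * D%:R) :> R.
  by field; rewrite !gt_eqF.
have -> : f%:R / N%:R = (D%:R * f%:R) / (N%:R * D%:R) :> R by field; rewrite !gt_eqF.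
rewrite ler_norml -mulNr !ler_pM2r ?invr_gt0 ?mulr_gt0 //; apply/andP; split; lra.
Qed.

Lemma count_ratio_LA_ge (A : set nat) K N :
  (forall a, A a -> 1 < a)%N -> Lprimitive A -> (0 < N)%N ->
  \sum_(0 <= a < K | a \in A) dL R a
    - (\sum_(0 <= a < K | a \in A) (totient (primorial (P a)))%:R) / N%:R
  <= count_ratio R (LA A) N.
Proof.
move=> A_gt1 primA N_gt0.
apply: (@le_trans _ _ (\sum_(0 <= a < K | a \in A) count_ratio R (L a) N)).
  rewrite mulr_suml -sumrB; apply: ler_sum => a /set_mem/A_gt1/ltnW a_gt0.
  by have := dist_count_ratio_L a_gt0 N_gt0; rewrite ler_norml => /andP[+ _]; lra.
rewrite count_ratioE; under eq_bigr do rewrite count_ratioE.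
rewrite -mulr_suml -natr_sum ler_wpM2r ?invr_ge0 // ler_nat.
exact/count_upto_bigcup_ge/Lprimitive_trivIset.
Qed.

Lemma count_ratio_LA_le (A : set nat) K N : (forall a, A a -> 1 < a)%N -> (0 < N)%N ->
  count_ratio R (LA A) N
  <= \sum_(0 <= a < K | a \in A) dL R a + \sum_(K <= a < N.+1 | a \in A) a%:R^-1
    + (\sum_(0 <= a < K | a \in A) (totient (primorial (P a)))%:R) / N%:R.
Proof.
move=> A_gt1 N_gt0; have N_pos : 0 < N%:R :> R by rewrite ltr0n.
rewrite count_ratioE (@le_trans _ _ ((\sum_(0 <= a < K | a \in A) count_upto (L a) N
    + \sum_(K <= a < N.+1 | a \in A) N %/ a)%:R / N%:R)) //.
  by rewrite ler_wpM2r ?invr_ge0 // ler_nat count_upto_bigcup_le // => a _ n /L_dvdn.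
rewrite natrD mulrDl addrAC !natr_sum !mulr_suml lerD //.
  rewrite -big_split /=; apply: ler_sum => a /set_mem/A_gt1/ltnW a_gt0.
  by have := dist_count_ratio_L a_gt0 N_gt0; rewrite -count_ratioE ler_norml => /andP[_ +]; lra.
apply: ler_sum => a /set_mem/A_gt1/ltnW a_gt0.
by rewrite ler_pdivrMr // ler_pdivlMl ?ltr0n // -natrM ler_nat mulnC leq_divM.
Qed.

End Densities.

Section Limits.
Variable R : realType.
Local Open Scope ring_scope.

Lemma cvg_div_natr (c : R) : c / n%:R @[n --> \oo] --> 0.
Proof.
rewrite -(mulr0 c); apply: cvgM; first exact: cvg_cst.
apply/gtr0_cvgV0; last exact: cvgr_idn.
by near=> n; rewrite ltr0n; near: n; exists 1%N.
Unshelve. all: by end_near. Qed.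

Lemma cvg_of_approximations (u x t E : R^nat) (l : R) :
  x @ \oo --> l -> t @ \oo --> 0 ->
  (forall K N, (0 < N)%N -> x K - E K / N%:R <= u N <= x K + t K + E K / N%:R) ->
  u @ \oo --> l.
Proof.
move=> x_l t_0 u_approx; apply/cvgrPdist_le => e e_gt0.
have e3_gt0 : 0 < e / 3 by rewrite divr_gt0.
near \oo => K.
have x_near : `|l - x K| <= e / 3 by near: K; apply: cvgr_dist_le.
have t_near : `|0 - t K| <= e / 3 by near: K; apply: cvgr_dist_le.
near=> N.
have E_near : `|0 - E K / N%:R| <= e / 3 by near: N; apply: cvgr_dist_le (cvg_div_natr _) _ _.
have N_gt0 : (0 < N)%N by near: N; exists 1%N.
have /andP[lo hi] := u_approx K N N_gt0.
move: x_near t_near E_near; rewrite !sub0r !normrN !ler_norml.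
by move=> /andP[x_lo x_hi] /andP[t_lo t_hi] /andP[E_lo E_hi]; apply/andP; split; lra.
Unshelve. all: by end_near. Qed.

Local Open Scope ereal_scope.

Lemma limn_einf_le (u v : (\bar R)^nat) :
  (\forall n \near \oo, u n <= v n) -> limn_einf u <= limn_einf v.
Proof.
move=> [N0 _ u_le_v]; rewrite !limn_einf_lim; apply: lee_lim; try exact: is_cvg_einfs.
exists N0 => // n N0_n; apply: le_ereal_inf_tmp => _ [m /= n_m <-].
apply: le_trans (u_le_v _ (leq_trans N0_n n_m)).
by apply: ereal_inf_lbound; exists m.
Qed.

Lemma le_limn_einf (u : R^nat) (x E : R) :
  (forall N, (0 < N)%N -> (x - E / N%:R <= u N)%R) -> x%:E <= limn_einf (EFin \o u).
Proof.
move=> u_ge; have <- : limn_einf (fun N => (x - E / N%:R)%:E) = x%:E.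
  apply: (cvg_limn_einf_sup _).1; apply: cvg_EFin; first exact: nearW.
  by rewrite -[x in _ --> x]subr0; apply: cvgB; [exact: cvg_cst | exact: cvg_div_natr].
apply: limn_einf_le; near=> N; rewrite lee_fin u_ge //.
by near: N; exists 1%N.
Unshelve. all: by end_near. Qed.

Variables (f : nat -> R) (A : set nat).
Hypothesis f_ge0 : forall a, (0 <= f a)%R.

Lemma nneseries_le_partial (y : \bar R) :
  (forall K, (\sum_(0 <= a < K | a \in A) f a)%:E <= y) -> \sum_(a <oo | a \in A) (f a)%:E <= y.
Proof.
move=> partial_le; apply: lime_le; first by apply: is_cvg_nneseries => n _ _; rewrite lee_fin.
by apply: nearW => K; rewrite sumEFin.
Qed.

Lemma partial_le_nneseries K :
  (\sum_(0 <= a < K | a \in A) f a)%:E <= \sum_(a <oo | a \in A) (f a)%:E.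
Proof. by rewrite -sumEFin; apply: nneseries_lim_ge => n _ _; rewrite lee_fin. Qed.

Hypothesis f_summable : \sum_(a <oo | a \in A) (f a)%:E < +oo.

Let sum_f := fine (\sum_(a <oo | a \in A) (f a)%:E).

Lemma nneseries_finE : \sum_(a <oo | a \in A) (f a)%:E = sum_f%:E.
Proof.
by rewrite /sum_f fineK // ge0_fin_numE // nneseries_ge0 // => n _ _; rewrite lee_fin.
Qed.

Lemma cvg_partial_nneseries : (\sum_(0 <= a < K | a \in A) f a)%R @[K --> \oo] --> sum_f.
Proof.
have : (\sum_(0 <= a < K | a \in A) f a)%:E @[K --> \oo] --> sum_f%:E.
  rewrite -nneseries_finE; under eq_fun do rewrite -sumEFin.
  by apply: is_cvg_nneseries => n _ _; rewrite lee_fin.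
exact: fine_cvg.
Qed.

Lemma cvg_nneseries_rem : (sum_f - \sum_(0 <= a < K | a \in A) f a)%R @[K --> \oo] --> 0%R.
Proof.
rewrite -[X in _ --> X](subrr sum_f).
by apply: cvgB; [exact: cvg_cst | exact: cvg_partial_nneseries].
Qed.

Lemma partial_tail_le K N :
  (\sum_(K <= a < N | a \in A) f a <= sum_f - \sum_(0 <= a < K | a \in A) f a)%R.
Proof.
have partial_le M : (\sum_(0 <= a < M | a \in A) f a <= sum_f)%R.
  by rewrite -lee_fin -nneseries_finE partial_le_nneseries.
case: (leqP K N) => [le_KN | lt_NK].
  by have := partial_le N; rewrite (big_cat_nat _ (n := K)) //=; lra.
by rewrite big_geq ?subr_ge0 ?partial_le // ltnW.
Qed.

End Limits.

Local Open Scope ring_scope.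
Local Open Scope ereal_scope.

Theorem lemma6p1 (R : realType) (A : set nat)
  (HA : forall a, A a -> (1 < a)%N) (Hprim : Lprimitive A) :
  (\sum_(a <oo | a \in A) (dL R a)%:E
     <= limn_einf (fun N => (count_ratio R (LA A) N)%:E))
  /\
  (\sum_(a <oo | a \in A) ((a%:R)^-1 : R)%:E < +oo ->
     (fun N => (count_ratio R (LA A) N)%:E) @ \oo
       --> \sum_(a <oo | a \in A) (dL R a)%:E).
Proof.
have inv_ge0 (a : nat) : (0 <= (a%:R : R)^-1)%R by rewrite invr_ge0.
pose err K := (\sum_(0 <= a < K | a \in A) (totient (primorial (P a)))%:R : R)%R.
split.
  apply: nneseries_le_partial => [a | K]; first exact: dL_ge0.
  by apply: (le_limn_einf (E := err K)) => N; exact: count_ratio_LA_ge.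
move=> inv_summable.
have dL_summable : \sum_(a <oo | a \in A) (dL R a)%:E < +oo.
  apply: le_lt_trans inv_summable.
  by apply: lee_nneseries => a *; rewrite lee_fin ?dL_ge0 ?dL_le_inv.
rewrite (nneseries_finE (@dL_ge0 R) dL_summable); apply: cvg_EFin; first exact: nearW.
apply: (cvg_of_approximations (E := err) (cvg_partial_nneseries (@dL_ge0 R) dL_summable)
          (cvg_nneseries_rem inv_ge0 inv_summable)) => K N N_gt0.
rewrite count_ratio_LA_ge //=.
apply: le_trans (count_ratio_LA_le R K HA N_gt0) _.
by rewrite lerD2r lerD2l partial_tail_le.
Qed.
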